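(* For each $k$ (indices mod $8g-4$), the arc length of $T_k([P_{k+2},Q_{k+2}])$ is less than half the arc length of $[P_{\sigma(k)},Q_{\sigma(k)}]$, and the arc length of $T_k([P_{k-1},Q_{k-1}])$ is less than half the arc length of $[P_{\sigma(k)+1},Q_{\sigma(k)+1}]$.
   Context: Setting. Fix $g\ge 2$; indices are mod $8g-4$. Let $\mathcal F$ be the regular hyperbolic $(8g-4)$-gon in the unit disk centered at $0$ with all interior angles $\pi/2$, sides labeled $1,\dots,8g-4$ counterclockwise, side $i$ joining vertices $V_i$ and $V_{i+1}$. The complete geodesic extending side $i$ goes from $P_i$ (beyond $V_i$) to $Q_{i+1}$ (beyond $V_{i+1}$) on the unit circle; counterclockwise order $P_1,Q_1,P_2,Q_2,\dots,P_{8g-4},Q_{8g-4}$. $\sigma(i)=4g-i$ ($i$ odd), $\sigma(i)=2-i$ ($i$ even). $T_i$ is the Möbius transformation mapping side $i$ onto side $\sigma(i)$, with isometric circle the geodesic $P_iQ_{i+1}$, mapped onto the geodesic $Q_{\sigma(i)+1}P_{\sigma(i)}$, inside to outside. Arcs $[A,B]$ are counterclockwise from $A$ to $B$. *)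

From Stdlib Require Import Reals ZArith.
From Coquelicot Require Import Coquelicot.
Open Scope R_scope.

Definition Nsides (g : nat) : R := 8 * INR g - 4.

Definition cis (t : R) : C := (cos t, sin t).

(* the side pairing index map sigma (on all integers; it is compatible
   with reduction mod 8g-4 since 8g-4 is even) *)
Definition sig_idx (g : nat) (i : Z) : Z :=
  if Z.odd i then (4 * Z.of_nat g - i)%Z else (2 - i)%Z.

Definition dot (u v : C) : R := Re (Cmult u (Cconj v)).

(* counterclockwise arc length from A to B (A, B on the unit circle):
   the unique t in [0, 2 pi) with B = A e^{it} *)
Definition arclen (A B : C) : R :=
  let z := Cmult (Cconj A) B in
  if Rle_dec 0 (Im z) then acos (Re z) else 2 * PI - acos (Re z).

Definition mobius (a b c d z : C) : C :=
  Cdiv (Cplus (Cmult a z) b) (Cplus (Cmult c z) d).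

(* The regular hyperbolic (8g-4)-gon centred at 0 with interior angles pi/2,
   sides labelled counterclockwise.  Data:
   - V i : vertex i (vertex V_i at Euclidean radius r, angle th0 + 2 pi i / N);
   - c i, s i : Euclidean centre and radius of the circle orthogonal to the
     unit circle carrying the geodesic through V_i and V_{i+1} (side i);
   - P i, Q (i+1) : endpoints on the unit circle of that geodesic, P_i beyond
     V_i and Q_{i+1} beyond V_{i+1}.
   Interior angle pi/2 at V_{i+1} = the geodesics of sides i and i+1 meet
   orthogonally, i.e. the radii from their centres to V_{i+1} are orthogonal. *)
Definition right_angled_regular_polygon (g : nat) (th0 r : R)
    (V c : Z -> C) (s : Z -> R) (P Q : Z -> C) : Prop :=
  0 < r < 1 /\
  (forall i : Z, V i = Cmult (RtoC r) (cis (th0 + 2 * PI * IZR i / Nsides g))) /\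
  (forall i : Z, 0 < s i /\ (Cmod (c i)) ^ 2 = 1 + (s i) ^ 2 /\
       Cmod (Cminus (V i) (c i)) = s i /\
       Cmod (Cminus (V (i + 1)%Z) (c i)) = s i) /\
  (forall i : Z, dot (Cminus (V (i + 1)%Z) (c i))
                     (Cminus (V (i + 1)%Z) (c (i + 1)%Z)) = 0) /\
  (forall i : Z, Cmod (P i) = 1 /\ Cmod (Cminus (P i) (c i)) = s i /\
       Cmod (Cminus (P i) (V i)) < Cmod (Cminus (P i) (V (i + 1)%Z))) /\
  (forall i : Z, Cmod (Q (i + 1)%Z) = 1 /\
       Cmod (Cminus (Q (i + 1)%Z) (c i)) = s i /\
       Cmod (Cminus (Q (i + 1)%Z) (V (i + 1)%Z)) <
         Cmod (Cminus (Q (i + 1)%Z) (V i))).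

(* T = mobius a b cc d is the side pairing T_k: it maps side k onto side
   sigma(k) (V_k -> V_{sigma k + 1}, V_{k+1} -> V_{sigma k}), its isometric
   circle { z : |cc z + d|^2 = |a d - b cc| } (where |T'(z)| = 1) is the
   geodesic P_k Q_{k+1}, which it maps onto the geodesic Q_{sigma k+1} P_{sigma k}
   (P_k -> Q_{sigma k+1}, Q_{k+1} -> P_{sigma k}), inside to outside. *)
Definition side_pairing (g : nat) (V c : Z -> C) (s : Z -> R) (P Q : Z -> C)
    (k : Z) (a b cc d : C) : Prop :=
  let T := mobius a b cc d in
  let sk := sig_idx g k in
  Cminus (Cmult a d) (Cmult b cc) <> RtoC 0 /\
  cc <> RtoC 0 /\
  (forall z : C, (Cmod (Cplus (Cmult cc z) d)) ^ 2 = Cmod (Cminus (Cmult a d) (Cmult b cc))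
                 <-> Cmod (Cminus z (c k)) = s k) /\
  T (V k) = V (sk + 1)%Z /\ T (V (k + 1)%Z) = V sk /\
  T (P k) = Q (sk + 1)%Z /\ T (Q (k + 1)%Z) = P sk /\
  (forall z : C, Cplus (Cmult cc z) d <> RtoC 0 ->
     Cmod (Cminus z (c k)) < s k -> s sk < Cmod (Cminus (T z) (c sk))).

From Stdlib Require Import Reals ZArith Lra Psatz.
From Coquelicot Require Import Coquelicot.
Open Scope R_scope.

(* Rotate the picture so that side i is bisected by the positive real axis.
   Everything is then governed by x = sqrt (cos (2 pi / N)), the reciprocal
   of the distance from 0 to the centres of the side circles: in the frame
   of side i the endpoints P_i, Q_(i+1) are x -+ i sqrt (1 - x^2),
   consecutive sides differ by the rotation e^(2 pi i / N), and, a Moebius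
   map with a prescribed pole being determined by two values, T_k becomes
   the hyperbolic half-turn z |-> (z - x) / (x z - 1) between the frames of
   sides k and sigma(k).  This map scales chords of the unit circle by
   (1 - x^2) / (|x a - 1| |x b - 1|), which is below 1/2 on the arc
   [P_(k+2), Q_(k+2)] as soon as N >= 12; a chord shrunk by half subtends
   less than half the angle since 1 - cos t <= 4 (1 - cos (t / 2)).  It
   also exchanges the two half circles preserving the cyclic order, so the
   image arc is still traversed counterclockwise.  All arcs [P_j, Q_j] are
   congruent, and [P_(k-1), Q_(k-1)] is the mirror image of [P_(k+2), Q_(k+2)]
   in the axis of side k, a symmetry the half-turn commutes with; so both
   inequalities are the same estimate. *)

(** * Unit complex numbers and arcs *)

Lemma Cmod_unit_sqr (z : C) : Cmod z = 1 -> fst z ^ 2 + snd z ^ 2 = 1.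
Proof. intros Hz. rewrite <- Cmod2_alt, Hz. ring. Qed.

Lemma Cmod_of_sqr (z : C) (m : R) : 0 <= m -> fst z ^ 2 + snd z ^ 2 = m ^ 2 -> Cmod z = m.
Proof. intros Hm Hz. unfold Cmod. rewrite Hz. now apply sqrt_pow2. Qed.

Lemma Cmod_eq_of_sqr (a b : C) :
  fst a ^ 2 + snd a ^ 2 = fst b ^ 2 + snd b ^ 2 -> Cmod a = Cmod b.
Proof. intros H. unfold Cmod. now rewrite H. Qed.

Lemma Cmod_sqr_lt (z w : C) : Cmod z < Cmod w -> Cmod z ^ 2 < Cmod w ^ 2.
Proof. intros H. pose proof (Cmod_ge_0 z). nra. Qed.

Lemma Cmod_add_sub_sqr (l m : C) :
  Cmod (l + m) ^ 2 - Cmod (l - m) ^ 2 = 4 * Re (l * Cconj m).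
Proof.
  rewrite !Cmod2_alt. destruct l as [l1 l2], m as [m1 m2].
  unfold Cminus, Re, Im, Cconj, Cmult, Cplus, Copp; cbn [fst snd]. ring.
Qed.

Lemma Cmod_sub_unit_sqr (u v : C) : Cmod u = 1 -> Cmod v = 1 ->
  Cmod (u - v) ^ 2 = 2 - 2 * Re (Cconj u * v).
Proof.
  intros Hu Hv. apply Cmod_unit_sqr in Hu, Hv. rewrite Cmod2_alt.
  destruct u as [u1 u2], v as [v1 v2]; cbn in *. lra.
Qed.

Lemma dot_zero_pythagoras (u v : C) : dot u v = 0 ->
  Cmod (u - v) ^ 2 = Cmod u ^ 2 + Cmod v ^ 2.
Proof.
  unfold dot. rewrite !Cmod2_alt. destruct u as [u1 u2], v as [v1 v2].
  unfold Re, Im, Cmult, Cconj, Cminus, Cplus, Copp; cbn [fst snd]. intros H. nra.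
Qed.

Lemma RtoC_neq0 (x : R) : x <> 0 -> RtoC x <> 0.
Proof. intros Hx H0. apply Hx. now apply (f_equal fst) in H0. Qed.

Lemma Cdiv_eq_mul (u v w : C) : v <> 0 -> (u / v = w)%C -> u = (w * v)%C.
Proof. intros Hv H. rewrite <- H. field. exact Hv. Qed.

Lemma Cmult_reg_r (u v z : C) : z <> 0 -> (u * z = v * z)%C -> u = v.
Proof.
  intros Hz H. replace u with (u * z / z)%C by (field; exact Hz).
  rewrite H. field. exact Hz.
Qed.

Lemma Cmult_unit_conj (E : C) : Cmod E = 1 -> (E * Cconj E = 1)%C.
Proof. intros HE. rewrite <- Cmod2_conj, HE. now rewrite pow1. Qed.

Lemma unit_frame (E z : C) : Cmod E = 1 -> z = (E * (Cconj E * z))%C.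
Proof.
  intros HE. transitivity ((E * Cconj E) * z)%C; [|ring].
  rewrite Cmult_unit_conj by exact HE. ring.
Qed.

Lemma Cconj_mult_rot (E u v : C) : Cmod E = 1 ->
  (Cconj (E * u) * (E * v) = Cconj u * v)%C.
Proof.
  intros HE. rewrite Cmult_conj.
  transitivity ((E * Cconj E) * (Cconj u * v))%C; [ring|].
  rewrite Cmult_unit_conj by exact HE. ring.
Qed.

Lemma Cmod_sub_rot (E u v : C) : Cmod E = 1 -> Cmod (E * u - E * v) = Cmod (u - v).
Proof.
  intros HE. replace (E * u - E * v)%C with (E * (u - v))%C by ring.
  rewrite Cmod_mult, HE. ring.
Qed.

Lemma Cmod_mul_unit_ne1 (x : R) (w : C) : x ^ 2 < 1 -> Cmod w = 1 -> (x * w <> 1)%C.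
Proof.
  intros Hx Hw Heq. apply (f_equal Cmod) in Heq.
  rewrite Cmod_mult, Hw, Cmod_R, Cmod_1, Rmult_1_r in Heq.
  pose proof (pow2_abs x) as Habs. rewrite Heq in Habs. lra.
Qed.

Lemma Cmod_scale_sub1_sqr (x : R) (w : C) : Cmod w = 1 ->
  Cmod (x * w - 1) ^ 2 = 1 + x ^ 2 - 2 * x * fst w.
Proof.
  intros Hw. apply Cmod_unit_sqr in Hw. rewrite Cmod2_alt.
  destruct w as [w1 w2]; cbn in *. nra.
Qed.

Lemma cis_add (u v : R) : cis (u + v) = (cis u * cis v)%C.
Proof.
  unfold cis, Cmult. rewrite cos_plus, sin_plus.
  apply injective_projections; cbn; ring.
Qed.

Lemma cis_unit (t : R) : Cmod (cis t) = 1.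
Proof.
  apply Cmod_of_sqr; [lra|]. unfold cis; cbn [fst snd].
  pose proof (sin2_cos2 t) as H. unfold Rsqr in H. nra.
Qed.

Lemma Cmod_cis_sub1_sqr (t : R) : Cmod (cis t - 1) ^ 2 = 2 - 2 * cos t.
Proof.
  rewrite Cmod2_alt. unfold Re, Im, cis, Cminus, Cplus, Copp, RtoC; cbn [fst snd].
  pose proof (sin2_cos2 t) as H. rewrite !Rsqr_pow2 in H.
  replace ((cos t + - 1) ^ 2 + (sin t + - 0) ^ 2)
    with (sin t ^ 2 + cos t ^ 2 + 1 - 2 * cos t) by ring. lra.
Qed.

Lemma arclen_rot (E u v : C) : Cmod E = 1 -> arclen (E * u) (E * v) = arclen u v.
Proof. intros HE. unfold arclen. now rewrite Cconj_mult_rot. Qed.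

Lemma arclen_conj (u v : C) : arclen (Cconj v) (Cconj u) = arclen u v.
Proof. unfold arclen. now rewrite Cconj_conj, Cmult_comm. Qed.

Lemma acos_lt_half (c c' : R) : -1 <= c -> c' <= 1 -> 4 * (1 - c') < 1 - c ->
  acos c' < acos c / 2.
Proof.
  intros Hc Hc' Hlt.
  set (t := acos c / 2).
  assert (Ht : 0 <= t <= PI / 2) by (pose proof (acos_bound c); unfold t; lra).
  assert (Hct : c = 2 * cos t ^ 2 - 1).
  { replace (2 * cos t ^ 2 - 1) with (cos (2 * t)) by (rewrite cos_2a_cos; ring).
    unfold t. replace (2 * (acos c / 2)) with (acos c) by field.
    symmetry; apply cos_acos; lra. }
  assert (Hcos : 0 <= cos t <= 1) by (split; [apply cos_ge_0|apply COS_bound]; lra).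
  (* 1 - c = 2 (1 - cos t) (1 + cos t) <= 4 (1 - cos t) *)
  assert (Hgt : cos t < c') by nra.
  apply cos_decreasing_0; try apply acos_bound; try lra.
  rewrite cos_acos; lra.
Qed.

Lemma arclen_lt_half (u v u' v' : C) :
  Cmod u = 1 -> Cmod v = 1 -> Cmod u' = 1 -> Cmod v' = 1 ->
  0 <= Im (Cconj u * v) -> 0 <= Im (Cconj u' * v') ->
  4 * Cmod (u' - v') ^ 2 < Cmod (u - v) ^ 2 ->
  arclen u' v' < arclen u v / 2.
Proof.
  intros Hu Hv Hu' Hv' Him Him' Hchord.
  rewrite !Cmod_sub_unit_sqr in Hchord by assumption.
  assert (Hre : forall z w : C, Cmod z = 1 -> Cmod w = 1 -> -1 <= Re (Cconj z * w) <= 1).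
  { intros z w Hz Hw. pose proof (re_le_Cmod (Cconj z * w)) as Hle.
    rewrite Cmod_mult, Cmod_conj, Hz, Hw, Rmult_1_r in Hle.
    unfold Rabs in Hle. destruct Rcase_abs in Hle; lra. }
  pose proof (Hre u v Hu Hv). pose proof (Hre u' v' Hu' Hv').
  unfold arclen.
  destruct (Rle_dec 0 (Im (Cconj u * v))); [|lra].
  destruct (Rle_dec 0 (Im (Cconj u' * v'))); [|lra].
  apply acos_lt_half; lra.
Qed.

Lemma upper_semicircle_order (u v : C) : Cmod u = 1 -> Cmod v = 1 ->
  0 < snd u -> 0 < snd v -> (0 < Im (Cconj u * v) <-> fst v < fst u).
Proof.
  intros Hu Hv Hu2 Hv2. apply Cmod_unit_sqr in Hu, Hv.
  destruct u as [u1 u2], v as [v1 v2]; unfold Im, Cconj, Cmult; cbn [fst snd] in *.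
  assert (Hid : (u1 * v2 - u2 * v1) * (u2 + v2)
                = (u1 - v1) * (((u1 + v1) ^ 2 + (u2 + v2) ^ 2) / 2)).
  { replace ((u1 + v1) ^ 2 + (u2 + v2) ^ 2) with (2 + 2 * (u1 * v1 + u2 * v2)) by nra.
    transitivity ((u1 - v1) * (1 + u1 * v1 + u2 * v2)
                  + u1 * (v1 ^ 2 + v2 ^ 2 - 1) - v1 * (u1 ^ 2 + u2 ^ 2 - 1)); [ring|].
    rewrite Hu, Hv. field. }
  assert (Hsum : 0 < ((u1 + v1) ^ 2 + (u2 + v2) ^ 2) / 2).
  { pose proof (pow2_ge_0 (u1 + v1)). pose proof (pow_lt (u2 + v2) 2 ltac:(lra)). lra. }
  replace (u1 * v2 + - u2 * v1) with (u1 * v2 - u2 * v1) by ring.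
  split; intros H.
  - assert (0 < (u1 - v1) * (((u1 + v1) ^ 2 + (u2 + v2) ^ 2) / 2)) by (rewrite <- Hid; nra).
    nra.
  - nra.
Qed.

(** * The hyperbolic half-turn exchanging 0 and x *)

Definition disk_swap (x : R) : C -> C := mobius 1 (- x) x (-1).

Lemma disk_swap_eq (x : R) (w : C) : disk_swap x w = ((w - x) / (x * w - 1))%C.
Proof. unfold disk_swap, mobius. f_equal; apply injective_projections; simpl; ring. Qed.

Lemma disk_swap_conj (x : R) (w : C) : (x * w <> 1)%C ->
  disk_swap x (Cconj w) = Cconj (disk_swap x w).
Proof.
  intros Hw. rewrite !disk_swap_eq, Cdiv_conj by now apply Cminus_eq_contra.
  rewrite !Cminus_conj, Cmult_conj.
  replace (Cconj x) with (RtoC x) by (apply injective_projections; cbn; ring).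
  replace (Cconj 1) with (RtoC 1) by (apply injective_projections; cbn; ring).
  reflexivity.
Qed.

Lemma disk_swap_sub (x : R) (u v : C) : (x * u <> 1)%C -> (x * v <> 1)%C ->
  (disk_swap x u - disk_swap x v = (x ^ 2 - 1) * (u - v) / ((x * u - 1) * (x * v - 1)))%C.
Proof.
  intros Hu Hv. rewrite !disk_swap_eq.
  apply Cminus_eq_contra in Hu, Hv. field. auto.
Qed.

Lemma disk_swap_chord (x : R) (u v : C) : x ^ 2 < 1 -> (x * u <> 1)%C -> (x * v <> 1)%C ->
  Cmod (disk_swap x u - disk_swap x v) * (Cmod (x * u - 1) * Cmod (x * v - 1))
    = (1 - x ^ 2) * Cmod (u - v).
Proof.
  intros Hx Hu Hv.
  rewrite disk_swap_sub by assumption.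
  apply Cminus_eq_contra in Hu, Hv.
  rewrite Cmod_div by (apply Cmult_neq_0; assumption).
  rewrite !Cmod_mult.
  replace (x ^ 2 - 1)%C with (RtoC (x ^ 2 - 1)) by (rewrite RtoC_minus, RtoC_pow; reflexivity).
  rewrite Cmod_R, Rabs_left1 by lra.
  apply Cmod_gt_0 in Hu, Hv. field. lra.
Qed.

Lemma disk_swap_contracts (x : R) (u v : C) :
  x ^ 2 < 1 -> u <> v -> (x * u <> 1)%C -> (x * v <> 1)%C ->
  4 * (1 - x ^ 2) ^ 2 < Cmod (x * u - 1) ^ 2 * Cmod (x * v - 1) ^ 2 ->
  4 * Cmod (disk_swap x u - disk_swap x v) ^ 2 < Cmod (u - v) ^ 2.
Proof.
  intros Hx Huv Hu Hv Hfar.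
  pose proof (disk_swap_chord x u v Hx Hu Hv) as Hchord.
  apply Cminus_eq_contra, Cmod_gt_0 in Huv.
  set (m := Cmod (u - v)) in *. set (D := Cmod (x * u - 1) * Cmod (x * v - 1)) in *.
  set (k := Cmod (disk_swap x u - disk_swap x v)) in *.
  assert (HD : 4 * (1 - x ^ 2) ^ 2 < D ^ 2) by (unfold D; lra).
  assert (Hk : 4 * (k * D) ^ 2 < D ^ 2 * m ^ 2) by (rewrite Hchord; pose proof (pow_lt m 2 Huv); nra).
  assert (0 < D ^ 2) by nra.
  nra.
Qed.

Lemma disk_swap_unit (x : R) (w : C) : x ^ 2 < 1 -> Cmod w = 1 ->
  let D := 1 + x ^ 2 - 2 * x * fst w in
  disk_swap x w = ((2 * x - (1 + x ^ 2) * fst w) / D, - (1 - x ^ 2) * snd w / D).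
Proof.
  intros Hx Hw D.
  assert (Hne : (x * w - 1 <> 0)%C)
    by (apply Cminus_eq_contra, Cmod_mul_unit_ne1; assumption).
  assert (HD : 0 < D).
  { unfold D. rewrite <- Cmod_scale_sub1_sqr by exact Hw.
    apply pow_lt, Cmod_gt_0, Hne. }
  apply Cmod_unit_sqr in Hw. rewrite disk_swap_eq.
  set (z := ((2 * x - (1 + x ^ 2) * fst w) / D, - (1 - x ^ 2) * snd w / D)).
  transitivity (z * (x * w - 1) / (x * w - 1))%C; [|field; exact Hne].
  f_equal. unfold z, D in *.
  destruct w as [w1 w2]; cbn [fst snd] in *.
  apply injective_projections; cbn; field_simplify_eq; try lra.
  replace (w2 ^ 2) with (1 - w1 ^ 2) by lra. ring.
Qed.

Lemma disk_swap_unit_norm (x : R) (w : C) : x ^ 2 < 1 -> Cmod w = 1 ->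
  Cmod (disk_swap x w) = 1.
Proof.
  intros Hx Hw.
  assert (Hne : (x * w - 1 <> 0)%C)
    by (apply Cminus_eq_contra, Cmod_mul_unit_ne1; assumption).
  rewrite disk_swap_eq, Cmod_div by exact Hne.
  replace (Cmod (w - x)) with (Cmod (x * w - 1)).
  - apply Cmod_gt_0 in Hne. field. lra.
  - apply Cmod_unit_sqr in Hw. apply Cmod_eq_of_sqr.
    destruct w as [w1 w2]; cbn in *. nra.
Qed.

Lemma disk_swap_re_lt (x : R) (u v : C) : x ^ 2 < 1 -> Cmod u = 1 -> Cmod v = 1 ->
  fst v < fst u -> fst (disk_swap x u) < fst (disk_swap x v).
Proof.
  intros Hx Hu Hv Hlt.
  pose proof (Cmod_scale_sub1_sqr x u Hu) as Du. pose proof (Cmod_scale_sub1_sqr x v Hv) as Dv.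
  pose proof (pow_lt _ 2 (proj1 (Cmod_gt_0 _) (Cminus_eq_contra _ _ (Cmod_mul_unit_ne1 x u Hx Hu)))).
  pose proof (pow_lt _ 2 (proj1 (Cmod_gt_0 _) (Cminus_eq_contra _ _ (Cmod_mul_unit_ne1 x v Hx Hv)))).
  rewrite (disk_swap_unit x u), (disk_swap_unit x v) by assumption. cbn [fst snd].
  set (Du' := 1 + x ^ 2 - 2 * x * fst u) in *. set (Dv' := 1 + x ^ 2 - 2 * x * fst v) in *.
  apply Rmult_lt_reg_r with (Du' * Dv'); [nra|].
  replace ((2 * x - (1 + x ^ 2) * fst u) / Du' * (Du' * Dv'))
    with ((2 * x - (1 + x ^ 2) * fst u) * Dv') by (field; lra).
  replace ((2 * x - (1 + x ^ 2) * fst v) / Dv' * (Du' * Dv'))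
    with ((2 * x - (1 + x ^ 2) * fst v) * Du') by (field; lra).
  unfold Du', Dv'.
  assert (0 < (1 - x ^ 2) ^ 2 * (fst u - fst v)) by (apply Rmult_lt_0_compat; [apply pow_lt|]; lra).
  replace ((2 * x - (1 + x ^ 2) * fst v) * (1 + x ^ 2 - 2 * x * fst u))
    with ((2 * x - (1 + x ^ 2) * fst u) * (1 + x ^ 2 - 2 * x * fst v)
          + (1 - x ^ 2) ^ 2 * (fst u - fst v)) by ring.
  lra.
Qed.

Lemma disk_swap_im_neg (x : R) (w : C) : x ^ 2 < 1 -> Cmod w = 1 -> 0 < snd w ->
  snd (disk_swap x w) < 0.
Proof.
  intros Hx Hw Hw2.
  pose proof (Cmod_scale_sub1_sqr x w Hw).
  pose proof (pow_lt _ 2 (proj1 (Cmod_gt_0 _) (Cminus_eq_contra _ _ (Cmod_mul_unit_ne1 x w Hx Hw)))).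
  rewrite disk_swap_unit by assumption. cbn [snd].
  unfold Rdiv. apply Rmult_neg_pos; [nra|]. apply Rinv_0_lt_compat. lra.
Qed.

Lemma disk_swap_upper_order (x : R) (u v : C) : x ^ 2 < 1 -> Cmod u = 1 -> Cmod v = 1 ->
  0 < snd u -> 0 < snd v -> 0 < Im (Cconj u * v) ->
  0 < Im (Cconj (disk_swap x u) * disk_swap x v).
Proof.
  intros Hx Hu Hv Hu2 Hv2 Huv.
  apply upper_semicircle_order in Huv; try assumption.
  pose proof (disk_swap_unit_norm x u Hx Hu). pose proof (disk_swap_unit_norm x v Hx Hv).
  replace (Cconj (disk_swap x u) * disk_swap x v)%C
    with (Cconj (- disk_swap x u) * (- disk_swap x v))%C by (rewrite Copp_conj; ring).
  apply upper_semicircle_order; rewrite ?Cmod_opp; try assumption; cbn [fst snd Copp].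
  - pose proof (disk_swap_im_neg x u Hx Hu Hu2). lra.
  - pose proof (disk_swap_im_neg x v Hx Hv Hv2). lra.
  - pose proof (disk_swap_re_lt x u v Hx Hu Hv Huv). lra.
Qed.

(* For x^2 = cos (2 pi / N): side_turn x = e^(2 pi i / N) turns side i onto
   side i+1, side_end x is P_i in the frame of side i, and side_arc_start x,
   side_arc_end x are P_(i+2), Q_(i+2) in that frame. *)
Definition side_turn (x : R) : C := (x ^ 2, sqrt (1 - x ^ 4)).
Definition side_end (x : R) : C := (x, - sqrt (1 - x ^ 2)).
Definition side_arc_start (x : R) : C := (side_turn x * side_turn x * side_end x)%C.
Definition side_arc_end (x : R) : C := (side_turn x * Cconj (side_end x))%C.

Lemma side_turn_unit (x : R) : x ^ 2 <= 1 -> Cmod (side_turn x) = 1.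
Proof.
  intros Hx. apply Cmod_of_sqr; [lra|]. unfold side_turn; cbn [fst snd].
  rewrite pow2_sqrt by nra. ring.
Qed.

Lemma side_end_unit (x : R) : x ^ 2 <= 1 -> Cmod (side_end x) = 1.
Proof.
  intros Hx. apply Cmod_of_sqr; [lra|]. unfold side_end; cbn [fst snd].
  replace ((- sqrt (1 - x ^ 2)) ^ 2) with (sqrt (1 - x ^ 2) ^ 2) by ring.
  rewrite pow2_sqrt by lra. ring.
Qed.

Lemma side_end_conj_ne (x : R) : x ^ 2 < 1 -> side_end x <> Cconj (side_end x).
Proof.
  intros Hx Heq. apply (f_equal snd) in Heq. unfold side_end, Cconj in Heq; cbn [fst snd] in Heq.
  assert (0 < sqrt (1 - x ^ 2)) by (apply sqrt_lt_R0; lra). lra.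
Qed.

Section SideArc.

Variable x : R.
Hypothesis x_pos : 0 < x.
Hypothesis x_sqr_ge : 17 / 20 <= x ^ 2.
Hypothesis x_sqr_lt1 : x ^ 2 < 1.

Let y := sqrt (1 - x ^ 2).
Let u := sqrt (1 + x ^ 2).

Let y_sqr : y ^ 2 = 1 - x ^ 2.
Proof. apply pow2_sqrt. lra. Qed.

Let y_pos : 0 < y.
Proof. apply sqrt_lt_R0. lra. Qed.

Let u_sqr : u ^ 2 = 1 + x ^ 2.
Proof. apply pow2_sqrt. nra. Qed.

Let u_bounds : 1 <= u <= 3 / 2.
Proof. assert (0 <= u) by apply sqrt_pos. split; nra. Qed.

Let turn_im : sqrt (1 - x ^ 4) = y * u.
Proof. unfold y, u. rewrite <- sqrt_mult by nra. f_equal. ring. Qed.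

Let arc_start_coords :
  side_arc_start x = (x * (2 * x ^ 4 - 1) + 2 * x ^ 2 * y ^ 2 * u,
                      y * (2 * x ^ 3 * u - (2 * x ^ 4 - 1))).
Proof.
  unfold side_arc_start, side_turn, side_end. rewrite turn_im. fold y.
  unfold Cmult; apply injective_projections; cbn [fst snd];
    replace (y * u * (y * u)) with ((1 - x ^ 2) * (1 + x ^ 2))
      by (rewrite <- y_sqr, <- u_sqr; ring); ring.
Qed.

Let arc_end_coords : side_arc_end x = (x ^ 3 - y ^ 2 * u, x * y * (x + u)).
Proof.
  unfold side_arc_end, side_turn, side_end. rewrite turn_im. fold y.
  unfold Cmult, Cconj; apply injective_projections; cbn [fst snd]; ring.
Qed.

Lemma side_arc_start_unit : Cmod (side_arc_start x) = 1.
Proof.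
  unfold side_arc_start.
  rewrite !Cmod_mult, side_turn_unit, side_end_unit by lra. ring.
Qed.

Lemma side_arc_end_unit : Cmod (side_arc_end x) = 1.
Proof.
  unfold side_arc_end.
  rewrite Cmod_mult, Cmod_conj, side_turn_unit, side_end_unit by lra. ring.
Qed.

Let side_arc_start_upper : 0 < snd (side_arc_start x).
Proof.
  rewrite arc_start_coords. cbn [snd].
  apply Rmult_lt_0_compat; [exact y_pos|].
  assert (x <= 1) by nra. pose proof (pow_lt x 3 x_pos).
  assert (x ^ 3 * u >= x ^ 3) by nra. assert (x ^ 4 <= x ^ 3) by nra. nra.
Qed.

Let side_arc_end_upper : 0 < snd (side_arc_end x).
Proof.
  rewrite arc_end_coords. cbn [snd].
  apply Rmult_lt_0_compat; [apply Rmult_lt_0_compat|]; lra.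
Qed.

Let side_arc_ccw : 0 < Im (Cconj (side_arc_start x) * side_arc_end x).
Proof.
  replace (Cconj (side_arc_start x) * side_arc_end x)%C
    with ((side_turn x * Cconj (side_turn x))
          * (Cconj (side_turn x) * (Cconj (side_end x) * Cconj (side_end x))))%C
    by (unfold side_arc_start, side_arc_end; rewrite !Cmult_conj; ring).
  rewrite Cmult_unit_conj, Cmult_1_l by (apply side_turn_unit; lra).
  unfold side_turn, side_end, Im, Cconj, Cmult. rewrite turn_im. fold y. cbn [fst snd].
  replace (x ^ 2 * (x * - - y + - - y * x) + - (y * u) * (x * x - - - y * - - y))
    with (y * (2 * x ^ 3 - u * (x ^ 2 - y ^ 2))) by ring.
  rewrite y_sqr. replace (x ^ 2 - (1 - x ^ 2)) with (2 * x ^ 2 - 1) by ring.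
  apply Rmult_lt_0_compat; [exact y_pos|].
  assert (Hsq : (2 * x ^ 3) ^ 2 - (u * (2 * x ^ 2 - 1)) ^ 2 = 3 * x ^ 2 - 1).
  { replace ((u * (2 * x ^ 2 - 1)) ^ 2) with (u ^ 2 * (2 * x ^ 2 - 1) ^ 2) by ring.
    rewrite u_sqr. ring. }
  assert (0 < 2 * x ^ 3) by (pose proof (pow_lt x 3 x_pos); lra).
  assert (0 <= u * (2 * x ^ 2 - 1)) by (apply Rmult_le_pos; lra).
  nra.
Qed.

Let side_arc_far :
  4 * (1 - x ^ 2) ^ 2
    < Cmod (x * side_arc_start x - 1) ^ 2 * Cmod (x * side_arc_end x - 1) ^ 2.
Proof.
  rewrite !Cmod_scale_sub1_sqr by (apply side_arc_start_unit || apply side_arc_end_unit).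
  rewrite arc_start_coords, arc_end_coords. cbn [fst].
  assert (Hs : y ^ 2 <= 1 + x ^ 2 - 2 * x * (x * (2 * x ^ 4 - 1) + 2 * x ^ 2 * y ^ 2 * u)).
  { replace (1 + x ^ 2 - 2 * x * (x * (2 * x ^ 4 - 1) + 2 * x ^ 2 * y ^ 2 * u))
      with (y ^ 2 * ((1 + 2 * x ^ 2) ^ 2 - 4 * x ^ 3 * u)) by (rewrite y_sqr; ring).
    assert (x ^ 3 <= 1) by nra. assert ((1 + 2 * x ^ 2) ^ 2 >= 7) by nra.
    assert (x ^ 3 * u <= 3 / 2) by nra.
    pose proof (pow2_ge_0 y). nra. }
  assert (He : 9 / 2 * y ^ 2 <= 1 + x ^ 2 - 2 * x * (x ^ 3 - y ^ 2 * u)).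
  { replace (1 + x ^ 2 - 2 * x * (x ^ 3 - y ^ 2 * u))
      with (y ^ 2 * (1 + 2 * x ^ 2 + 2 * x * u)) by (rewrite y_sqr; ring).
    assert (9 / 10 <= x) by nra. assert (x * u >= 9 / 10) by nra.
    pose proof (pow2_ge_0 y). nra. }
  rewrite <- y_sqr.
  pose proof (pow_lt y 2 y_pos). nra.
Qed.

Theorem side_arc_swap_lt_half :
  arclen (disk_swap x (side_arc_start x)) (disk_swap x (side_arc_end x))
    < arclen (side_arc_start x) (side_arc_end x) / 2.
Proof.
  pose proof side_arc_start_unit as Hs. pose proof side_arc_end_unit as He.
  apply arclen_lt_half; auto using disk_swap_unit_norm.
  - left. exact side_arc_ccw.
  - left. apply disk_swap_upper_order; auto.
  - apply disk_swap_contracts; auto using Cmod_mul_unit_ne1.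
    intro Heq. pose proof side_arc_ccw as Hccw. rewrite Heq in Hccw.
    unfold Im, Cconj, Cmult in Hccw. cbn [fst snd] in Hccw. lra.
Qed.

End SideArc.

(** * Normal form of the polygon *)

Lemma center_in_frame (E c : C) (r t s : R) : Cmod E = 1 -> 0 < r -> 0 < sin t ->
  Cmod c ^ 2 = 1 + s ^ 2 ->
  Cmod (E * (r * cis (- t)) - c) = s -> Cmod (E * (r * cis t) - c) = s ->
  c = (E * RtoC ((1 + r ^ 2) / (2 * r * cos t)))%C.
Proof.
  intros HE Hr Hsin Hc Hleft Hright.
  rewrite (unit_frame E c HE) in Hc, Hleft, Hright |- *.
  set (c' := (Cconj E * c)%C) in *. clearbody c'.
  rewrite Cmod_mult, HE, Rmult_1_l in Hc.
  rewrite Cmod_sub_rot in Hleft, Hright by exact HE.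
  apply (f_equal (fun m => m ^ 2)) in Hleft, Hright.
  rewrite Cmod2_alt in Hc, Hleft, Hright. f_equal.
  pose proof (sin2_cos2 t) as Htrig. rewrite !Rsqr_pow2 in Htrig.
  destruct c' as [c1 c2]. unfold Re, Im, cis, Cminus, Cplus, Copp, Cmult, RtoC in *.
  rewrite cos_neg, sin_neg in Hleft. cbn [fst snd] in *.
  assert (Hc2 : c2 = 0).
  { assert (H : 4 * r * sin t * c2 = 0) by nra.
    apply Rmult_integral in H as [H|H]; [nra|exact H]. }
  subst c2.
  assert (Hc1 : 2 * r * cos t * c1 = 1 + r ^ 2) by nra.
  assert (Hcos : cos t <> 0) by (intro H0; rewrite H0 in Hc1; nra).
  apply injective_projections; cbn [fst snd]; [|reflexivity].
  field_simplify_eq; [|split; [exact Hcos|lra]]. lra.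
Qed.

Lemma unit_lower_eq (p : C) (x : R) : Cmod p = 1 -> fst p = x -> snd p < 0 -> p = side_end x.
Proof.
  intros Hp Hx Hneg. apply Cmod_unit_sqr in Hp.
  unfold side_end. apply injective_projections; cbn [fst snd]; [exact Hx|].
  rewrite <- Hx. replace (1 - fst p ^ 2) with ((- snd p) ^ 2) by nra.
  rewrite sqrt_pow2 by lra. ring.
Qed.

Lemma unit_upper_eq (p : C) (x : R) : Cmod p = 1 -> fst p = x -> 0 < snd p ->
  p = Cconj (side_end x).
Proof.
  intros Hp Hx Hpos. apply Cmod_unit_sqr in Hp.
  unfold side_end, Cconj. apply injective_projections; cbn [fst snd]; [exact Hx|].
  rewrite <- Hx. replace (1 - fst p ^ 2) with (snd p ^ 2) by nra.
  rewrite sqrt_pow2 by lra. ring.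
Qed.

Lemma endpoint_in_frame (E p : C) (r t rho : R) : Cmod E = 1 -> 0 < r -> 0 < sin t ->
  0 < rho -> Cmod p = 1 -> Cmod (p - E * rho) ^ 2 = rho ^ 2 - 1 ->
  (Cmod (p - E * (r * cis (- t))) < Cmod (p - E * (r * cis t)) ->
     p = (E * side_end (/ rho))%C) /\
  (Cmod (p - E * (r * cis t)) < Cmod (p - E * (r * cis (- t))) ->
     p = (E * Cconj (side_end (/ rho)))%C).
Proof.
  intros HE Hr Hsin Hrho Hp Hc.
  rewrite (unit_frame E p HE) in Hp, Hc |- *.
  set (p' := (Cconj E * p)%C) in *. clearbody p'.
  rewrite Cmod_mult, HE, Rmult_1_l in Hp.
  rewrite Cmod_sub_rot in Hc by exact HE.
  assert (Hre : fst p' = / rho).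
  { pose proof (Cmod_unit_sqr _ Hp) as Hp2. rewrite Cmod2_alt in Hc.
    destruct p' as [p1 p2]. unfold Re, Im, Cminus, Cplus, Copp, RtoC in Hc. cbn [fst snd] in *.
    field_simplify_eq; [|lra]. nra. }
  assert (Hside : Cmod (p' - r * cis (- t)) ^ 2 - Cmod (p' - r * cis t) ^ 2
                  = 4 * r * sin t * snd p').
  { rewrite !Cmod2_alt. destruct p' as [p1 p2].
    unfold Re, Im, cis, Cminus, Cplus, Copp, Cmult, RtoC. rewrite cos_neg, sin_neg.
    cbn [fst snd]. ring. }
  assert (Hpos : 0 < 4 * r * sin t) by nra.
  split; intros Hlt; rewrite !Cmod_sub_rot in Hlt by exact HE;
    apply Cmod_sqr_lt in Hlt; f_equal.
  - apply unit_lower_eq; [exact Hp|exact Hre|nra].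
  - apply unit_upper_eq; [exact Hp|exact Hre|nra].
Qed.

Definition side_mid_dir (g : nat) (th0 : R) (i : Z) : C :=
  cis (th0 + 2 * PI * IZR i / Nsides g + PI / Nsides g).

Lemma Nsides_ge_12 (g : nat) : (2 <= g)%nat -> 12 <= Nsides g.
Proof. intros Hg. apply le_INR in Hg. unfold Nsides. simpl in Hg. lra. Qed.

Section Frame.

Variables (g : nat) (th0 : R).
Hypothesis g_ge2 : (2 <= g)%nat.

Let N := Nsides g.
Let h := PI / N.
Let e := side_mid_dir g th0.

Let h_bounds : 0 < h <= PI / 12.
Proof.
  pose proof PI_RGT_0. pose proof (Nsides_ge_12 g g_ge2).
  unfold h, N. split; [apply Rdiv_lt_0_compat; lra|].
  apply Rmult_le_compat_l; [lra|]. apply Rinv_le_contravar; lra.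
Qed.

Let sin_h_pos : 0 < sin h.
Proof. pose proof PI_RGT_0. apply sin_gt_0; lra. Qed.

Let cos_h_pos : 0 < cos h.
Proof. pose proof PI_RGT_0. apply cos_gt_0; lra. Qed.

Let cos_2h_bounds : 17 / 20 <= cos (2 * h) < 1.
Proof.
  pose proof PI_RGT_0. split.
  - assert (Hcos : cos (PI / 6) <= cos (2 * h)).
    { destruct (Rle_lt_or_eq_dec (2 * h) (PI / 6) ltac:(lra)) as [Hlt|Heq].
      - left. apply cos_decreasing_1; lra.
      - rewrite Heq. lra. }
    rewrite cos_PI6 in Hcos.
    assert (1.7 <= sqrt 3).
    { rewrite <- (sqrt_pow2 1.7) by lra. apply sqrt_le_1_alt. lra. }
    lra.
  - rewrite <- cos_0. apply cos_decreasing_1; lra.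
Qed.

Let cis_2h (x : R) : 0 < x -> x ^ 2 = cos (2 * h) -> cis (2 * h) = side_turn x.
Proof.
  intros Hx Hx2. pose proof PI_RGT_0.
  assert (Hsin : 0 < sin (2 * h)) by (apply sin_gt_0; lra).
  unfold cis, side_turn. apply injective_projections; cbn [fst snd]; [easy|].
  rewrite <- (sqrt_pow2 (sin (2 * h))) by lra. f_equal.
  pose proof (sin2_cos2 (2 * h)) as Htrig. rewrite !Rsqr_pow2 in Htrig.
  replace (x ^ 4) with ((x ^ 2) ^ 2) by ring. rewrite Hx2. lra.
Qed.

Lemma side_mid_dir_unit (i : Z) : Cmod (e i) = 1.
Proof. apply cis_unit. Qed.

Lemma side_mid_dir_succ (i : Z) : e (i + 1)%Z = (e i * cis (2 * h))%C.
Proof.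
  unfold e, side_mid_dir. rewrite <- cis_add, plus_IZR. f_equal.
  fold N h. unfold h. field. pose proof (Nsides_ge_12 g g_ge2). unfold N. lra.
Qed.

Lemma vertex_in_frame (r : R) (V : Z -> C) :
  (forall i : Z, V i = (r * cis (th0 + 2 * PI * IZR i / N))%C) ->
  forall i : Z, V i = (e i * (r * cis (- h)))%C /\ V (i + 1)%Z = (e i * (r * cis h))%C.
Proof.
  intros HV i. rewrite !HV. unfold e, side_mid_dir. fold N h.
  assert (Hrot : forall a b : R, (cis a * (r * cis b))%C = (r * cis (a + b))%C)
    by (intros a b; rewrite cis_add; ring).
  rewrite !Hrot, plus_IZR. pose proof (Nsides_ge_12 g g_ge2).
  split; do 2 f_equal; unfold h, N in *; field; lra.
Qed.

Theorem regular_polygon_frame (r : R) (V c : Z -> C) (s : Z -> R) (P Q : Z -> C) :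
  right_angled_regular_polygon g th0 r V c s P Q ->
  exists x : R, 0 < x /\ 17 / 20 <= x ^ 2 /\ x ^ 2 < 1 /\
    (forall i : Z, e (i + 1)%Z = (e i * side_turn x)%C) /\
    (forall i : Z, c i = (e i * RtoC (/ x))%C) /\
    (forall i : Z, P i = (e i * side_end x)%C) /\
    (forall i : Z, Q (i + 1)%Z = (e i * Cconj (side_end x))%C).
Proof.
  intros ([Hr _] & HV & Hcirc & Hdot & HP & HQ).
  pose proof (vertex_in_frame r V HV) as Hvert.
  set (rho := (1 + r ^ 2) / (2 * r * cos h)).
  assert (Hrho : 0 < rho) by (apply Rdiv_lt_0_compat; nra).
  assert (Hcen : forall i : Z, c i = (e i * rho)%C).
  { intro i. destruct (Hcirc i) as (_ & Hc2 & Hleft & Hright).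
    destruct (Hvert i) as [Hv Hv1]. rewrite Hv in Hleft. rewrite Hv1 in Hright.
    exact (center_in_frame (e i) (c i) r h (s i)
             (side_mid_dir_unit i) Hr sin_h_pos Hc2 Hleft Hright). }
  assert (Hs2 : forall i : Z, s i ^ 2 = rho ^ 2 - 1).
  { intro i. destruct (Hcirc i) as (_ & Hc2 & _).
    rewrite Hcen, Cmod_mult, side_mid_dir_unit, Cmod_R, Rabs_pos_eq in Hc2 by lra. lra. }
  assert (Hrho2 : rho ^ 2 * cos (2 * h) = 1).
  { pose proof (dot_zero_pythagoras _ _ (Hdot 0%Z)) as Hpyth.
    replace (V (0 + 1)%Z - c 0%Z - (V (0 + 1)%Z - c (0 + 1)%Z))%C
      with (e 0%Z * (rho * (cis (2 * h) - 1)))%C in Hpyth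
      by (rewrite !Hcen, side_mid_dir_succ; ring).
    destruct (Hcirc 0%Z) as (_ & _ & _ & Hs0). destruct (Hcirc (0 + 1)%Z) as (_ & _ & Hs1 & _).
    rewrite Hs0, Hs1, !Cmod_mult, side_mid_dir_unit, Cmod_R, Rabs_pos_eq in Hpyth by lra.
    replace ((1 * (rho * Cmod (cis (2 * h) - 1))) ^ 2)
      with (rho ^ 2 * Cmod (cis (2 * h) - 1) ^ 2) in Hpyth by ring.
    rewrite Cmod_cis_sub1_sqr, !Hs2 in Hpyth. lra. }
  assert (Hend : forall (i : Z) (p : C), Cmod (p - c i) = s i ->
            Cmod (p - e i * rho) ^ 2 = rho ^ 2 - 1)
    by (intros i p Hpc; rewrite <- Hcen, Hpc; apply Hs2).
  set (x := / rho).
  assert (Hx : 0 < x) by (apply Rinv_0_lt_compat; exact Hrho).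
  assert (Hx2 : x ^ 2 = cos (2 * h)).
  { unfold x. rewrite pow_inv. apply (Rmult_eq_reg_l (rho ^ 2)); [|nra].
    rewrite Rinv_r by nra. lra. }
  exists x. repeat split; try lra.
  - intro i. rewrite side_mid_dir_succ. f_equal. now apply cis_2h.
  - intro i. rewrite Hcen. unfold x. now rewrite Rinv_inv.
  - intro i. destruct (HP i) as (HP1 & HPc & HPside), (Hvert i) as [Hv Hv1].
    rewrite Hv, Hv1 in HPside.
    exact (proj1 (endpoint_in_frame (e i) (P i) r h rho (side_mid_dir_unit i) Hr sin_h_pos
                    Hrho HP1 (Hend i (P i) HPc)) HPside).
  - intro i. destruct (HQ i) as (HQ1 & HQc & HQside), (Hvert i) as [Hv Hv1].
    rewrite Hv, Hv1 in HQside.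
    exact (proj2 (endpoint_in_frame (e i) (Q (i + 1)%Z) r h rho (side_mid_dir_unit i) Hr
                    sin_h_pos Hrho HQ1 (Hend i _ HQc)) HQside).
Qed.

End Frame.

Section SideArcs.

Variables (e P Q : Z -> C) (x : R).
Hypothesis e_succ : forall i : Z, e (i + 1)%Z = (e i * side_turn x)%C.
Hypothesis P_frame : forall i : Z, P i = (e i * side_end x)%C.
Hypothesis Q_frame : forall i : Z, Q (i + 1)%Z = (e i * Cconj (side_end x))%C.

Lemma side_arc_in_frame (j : Z) :
  P j = (e (j - 2) * side_arc_start x)%C /\ Q j = (e (j - 2) * side_arc_end x)%C.
Proof.
  unfold side_arc_start, side_arc_end.
  replace j with (j - 2 + 1 + 1)%Z at 1 3 by ring.
  rewrite P_frame, Q_frame, !e_succ. split; ring.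
Qed.

Lemma side_arc_in_frame_back (j : Z) : Cmod (side_turn x) = 1 ->
  P (j - 1)%Z = (e j * Cconj (side_arc_end x))%C /\
  Q (j - 1)%Z = (e j * Cconj (side_arc_start x))%C.
Proof.
  intros Hturn.
  assert (e_pred : forall i : Z, e i = (e (i + 1)%Z * Cconj (side_turn x))%C).
  { intro i. rewrite e_succ.
    transitivity (e i * (side_turn x * Cconj (side_turn x)))%C;
      [now rewrite Cmult_unit_conj, Cmult_1_r|ring]. }
  unfold side_arc_start, side_arc_end. rewrite !Cmult_conj, Cconj_conj.
  replace (j - 1)%Z with (j - 2 + 1)%Z at 2 by ring.
  rewrite P_frame, Q_frame, (e_pred (j - 1)%Z), (e_pred (j - 2)%Z).
  replace (j - 2 + 1)%Z with (j - 1)%Z by ring. rewrite (e_pred (j - 1)%Z).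
  replace (j - 1 + 1)%Z with j by ring. split; ring.
Qed.

End SideArcs.

(** * The side pairings *)

Lemma isometric_circle_center (cc d q : C) (K s : R) : 0 < s -> cc <> 0 ->
  (forall z : C, Cmod (cc * z + d) ^ 2 = K <-> Cmod (z - q) = s) ->
  d = (- (cc * q))%C.
Proof.
  intros Hs Hcc Hiso.
  set (l := (cc * q + d)%C).
  assert (Hcirc : forall t : C, Cmod t = s -> Cmod (l + cc * t) ^ 2 = K).
  { intros t Ht. replace (l + cc * t)%C with (cc * (q + t) + d)%C by (unfold l; ring).
    apply Hiso. now replace (q + t - q)%C with t by ring. }
  assert (Hperp : forall t : C, Cmod t = s -> Re (l * Cconj (cc * t)) = 0).
  { intros t Ht.
    assert (Ht' : Cmod (- t) = s) by now rewrite Cmod_opp.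
    pose proof (Cmod_add_sub_sqr l (cc * t)) as Hid.
    replace (l - cc * t)%C with (l + cc * - t)%C in Hid by ring.
    rewrite (Hcirc t Ht), (Hcirc (- t)%C Ht') in Hid. lra. }
  assert (Hre := Hperp (RtoC s) ltac:(rewrite Cmod_R; apply Rabs_pos_eq; lra)).
  assert (Him := Hperp (s * Ci)%C ltac:(rewrite Cmod_mult, Cmod_R, Cmod_Ci, Rabs_pos_eq; lra)).
  assert (Hl : (l * Cconj cc = 0)%C).
  { destruct l as [l1 l2], cc as [c1 c2].
    unfold Re, Cconj, Cmult, Ci, RtoC in Hre, Him |- *; cbn [fst snd] in Hre, Him |- *.
    apply injective_projections; cbn [fst snd]; nra. }
  assert (Hconj : Cconj cc <> 0).
  { intro H0. apply Hcc. rewrite <- (Cconj_conj cc), H0.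
    now apply injective_projections; cbn; ring. }
  assert (Hl0 : l = 0).
  { replace l with (l * Cconj cc / Cconj cc)%C by (field; exact Hconj).
    rewrite Hl. field. exact Hconj. }
  replace d with (l - cc * q)%C by (unfold l; ring). rewrite Hl0. ring.
Qed.

(* A Moebius map with pole rho = 1/x is determined by its values at two
   points; here they are those of disk_swap x at p and conj p. *)
Lemma mobius_in_frame (a b cc d E F p : C) (x : R) :
  cc <> 0 -> E <> 0 -> x <> 0 -> p <> Cconj p ->
  (p * Cconj p = 1)%C -> (p + Cconj p = RtoC (2 * x))%C ->
  d = (- (cc * (E * RtoC (/ x))))%C ->
  mobius a b cc d (E * p) = (F * Cconj p)%C ->
  mobius a b cc d (E * Cconj p) = (F * p)%C ->
  forall w : C, (x * w <> 1)%C -> mobius a b cc d (E * w) = (F * disk_swap x w)%C.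
Proof.
  intros Hcc HE Hx Hpp Hunit Hre Hd HTp HTq w Hw.
  set (rho := / x) in Hd.
  assert (Hden : forall z : C, (cc * (E * z) + d = cc * E * (z - rho))%C)
    by (intro z; rewrite Hd; ring).
  assert (Hne : forall z : C, z <> RtoC rho -> (cc * E * (z - rho) <> 0)%C).
  { intros z Hz. apply Cmult_neq_0; [now apply Cmult_neq_0|now apply Cminus_eq_contra]. }
  assert (Hreal : forall z : C, z = RtoC rho -> Cconj z = z).
  { intros z ->. now apply injective_projections; cbn; [|ring]. }
  assert (Hp : p <> RtoC rho) by (intro Hz; apply Hpp; now rewrite (Hreal p Hz)).
  assert (Hq : Cconj p <> RtoC rho)
    by (intro Hz; apply Hpp; pose proof (Hreal _ Hz) as Hpq; now rewrite Cconj_conj in Hpq).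
  unfold mobius in HTp, HTq |- *. rewrite !Hden in *.
  apply Cdiv_eq_mul in HTp; [|now apply Hne]. apply Cdiv_eq_mul in HTq; [|now apply Hne].
  assert (Ha : a = (F * cc * rho)%C).
  { apply (Cmult_reg_r _ _ (E * (p - Cconj p))%C).
    { apply Cmult_neq_0; [exact HE|now apply Cminus_eq_contra]. }
    transitivity ((a * (E * p) + b) - (a * (E * Cconj p) + b))%C; [ring|].
    rewrite HTp, HTq. ring. }
  assert (Hb : b = (- (F * cc * E))%C).
  { transitivity ((a * (E * p) + b) - a * (E * p))%C; [ring|].
    rewrite HTp, Ha.
    transitivity (F * cc * E * (p * Cconj p - rho * (p + Cconj p)))%C; [ring|].
    rewrite Hunit, Hre, <- RtoC_mult.
    replace (rho * (2 * x)) with 2 by (unfold rho; field; exact Hx).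
    apply injective_projections; cbn; ring. }
  assert (Hw' : w <> RtoC rho).
  { intro Hz. apply Hw. rewrite Hz, <- RtoC_mult. unfold rho. now rewrite Rinv_r. }
  rewrite disk_swap_eq, Ha, Hb.
  unfold rho in *. rewrite RtoC_inv in * by exact Hx.
  apply RtoC_neq0 in Hx. apply Cminus_eq_contra in Hw, Hw'.
  field. repeat split; assumption.
Qed.

Lemma side_pairing_in_frame (g : nat) (V c : Z -> C) (s : Z -> R) (P Q : Z -> C)
    (k : Z) (a b cc d E F : C) (x : R) :
  side_pairing g V c s P Q k a b cc d -> 0 < s k -> Cmod E = 1 -> 0 < x -> x ^ 2 < 1 ->
  c k = (E * RtoC (/ x))%C ->
  P k = (E * side_end x)%C -> Q (k + 1)%Z = (E * Cconj (side_end x))%C ->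
  P (sig_idx g k) = (F * side_end x)%C ->
  Q (sig_idx g k + 1)%Z = (F * Cconj (side_end x))%C ->
  forall w : C, Cmod w = 1 -> mobius a b cc d (E * w) = (F * disk_swap x w)%C.
Proof.
  intros HT Hs HE Hx Hx1 Hc HPk HQk HPs HQs w Hw.
  destruct HT as (_ & Hcc & Hiso & _ & _ & HTP & HTQ & _).
  apply mobius_in_frame with (p := side_end x); auto using Cmod_mul_unit_ne1.
  - intro H0. rewrite H0, Cmod_0 in HE. lra.
  - lra.
  - now apply side_end_conj_ne.
  - rewrite <- Cmod2_conj, side_end_unit by lra. apply injective_projections; cbn; ring.
  - unfold side_end. apply injective_projections; cbn; ring.
  - rewrite <- Hc. exact (isometric_circle_center _ _ _ _ _ Hs Hcc Hiso).
  - now rewrite <- HPk, HTP.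
  - now rewrite <- HQk, HTQ.
Qed.

Theorem corollary8p3 (g : nat) (Hg : (2 <= g)%nat) (th0 r : R)
    (V c : Z -> C) (s : Z -> R) (P Q : Z -> C)
    (HF : right_angled_regular_polygon g th0 r V c s P Q)
    (k : Z) (a b cc d : C) (HT : side_pairing g V c s P Q k a b cc d) :
  arclen (mobius a b cc d (P (k + 2)%Z)) (mobius a b cc d (Q (k + 2)%Z))
    < arclen (P (sig_idx g k)) (Q (sig_idx g k)) / 2 /\
  arclen (mobius a b cc d (P (k - 1)%Z)) (mobius a b cc d (Q (k - 1)%Z))
    < arclen (P (sig_idx g k + 1)%Z) (Q (sig_idx g k + 1)%Z) / 2.
Proof.
  destruct (regular_polygon_frame g th0 Hg r V c s P Q HF)
    as (x & Hx & Hx2 & Hx1 & Hsucc & Hc & HP & HQ).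
  set (e := side_mid_dir g th0) in *. set (sk := sig_idx g k).
  assert (He : forall i : Z, Cmod (e i) = 1) by (intro; apply side_mid_dir_unit).
  assert (Hs : 0 < s k) by (destruct HF as (_ & _ & Hcirc & _); apply Hcirc).
  pose proof (side_pairing_in_frame g V c s P Q k a b cc d (e k) (e sk) x
                HT Hs (He k) Hx Hx1 (Hc k) (HP k) (HQ k) (HP sk) (HQ sk)) as HTe.
  pose proof (side_arc_start_unit x Hx1). pose proof (side_arc_end_unit x Hx1).
  pose proof (side_arc_in_frame e P Q x Hsucc HP HQ) as Harc.
  split.
  - destruct (Harc (k + 2)%Z) as [-> ->], (Harc sk) as [-> ->].
    replace (k + 2 - 2)%Z with k by ring.
    rewrite !HTe, !arclen_rot by auto.
    now apply side_arc_swap_lt_half.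
  - destruct (side_arc_in_frame_back e P Q x Hsucc HP HQ k (side_turn_unit x ltac:(lra)))
      as [-> ->].
    destruct (Harc (sk + 1)%Z) as [-> ->].
    rewrite !HTe by now rewrite Cmod_conj.
    rewrite !disk_swap_conj, !arclen_rot, arclen_conj by auto using Cmod_mul_unit_ne1.
    now apply side_arc_swap_lt_half.
Qed.
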